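(* Let $N$ be a simply connected $2$-step nilpotent Lie group with Lie algebra $\mathfrak n$ and a left-invariant Lorentzian metric $\langle\cdot,\cdot\rangle$ of $pH$-type whose center $\mathfrak Z$ is positive definite, of dimension $m$, and let $\mathfrak E=\mathfrak Z^{\perp}$, of dimension $n$. Then $(N,\langle\cdot,\cdot\rangle)$ is a nilsoliton if and only if $m=1$ and $n=2$ (so that $N$ is the three-dimensional Heisenberg group).
   Context: For $y\in\mathfrak n$ let $J_y$ be defined by $\langle J_y x,w\rangle=\langle y,[x,w]\rangle$ for all $x,w$. Here $\mathfrak n=\mathfrak Z\oplus\mathfrak E$ orthogonally; choose orthonormal bases $\{z_\alpha\}$ of $\mathfrak Z$, $\{e_a\}$ of $\mathfrak E$, $\varepsilon_\alpha=\langle z_\alpha,z_\alpha\rangle$, $\bar\varepsilon_a=\langle e_a,e_a\rangle$. The involution $\iota$ is given by $\iota z_\alpha=\varepsilon_\alpha z_\alpha$, $\iota e_a=\bar\varepsilon_a e_a$, and $j(y)=\iota\circ J_{\iota y}$. The metric is of $pH$-type if $j(z)^2=-\langle z,\iota z\rangle I$ (on $\mathfrak E$) for all $z$ in the center. $\mathrm{Ric}$ is the Ricci operator ($\langle\mathrm{Ric}\,x,y\rangle=\varrho(x,y)$). The metric is a nilsoliton if $\mathrm{Ric}=c\cdot\mathrm{Id}+D$ for some $c\in\mathbb R$ and some derivation $D$ of $\mathfrak n$. *)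

From HB Require Import structures.
From mathcomp Require Import all_boot all_order all_algebra.
From mathcomp Require Import reals.
Set Implicit Arguments. Unset Strict Implicit. Unset Printing Implicit Defensive.
Import GRing.Theory Num.Theory.
Local Open Scope ring_scope.

(* A d-dimensional real Lie algebra is modelled on row vectors 'rV[R]_d,
   with a bracket br; a linear map is a matrix M acting by x |-> x *m M;
   a scalar product is given by its Gram matrix G: <x,y> = x G y^T. *)

Section MetricLie.
Variables (R : realType) (d : nat).
Notation V := 'rV[R]_d.

Definition ipG (G : 'M[R]_d) (x y : V) : R := (x *m G *m y^T) 0 0.

Definition ev (j : 'I_d) : V := delta_mx 0 j.

(* the vector v with <v, w> = a w for all w (a linear, G nondegenerate) *)
Definition dual (G : 'M[R]_d) (a : V -> R) : V := (\row_j a (ev j)) *m invmx G.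

Definition is_lie_bracket (br : V -> V -> V) : Prop :=
  [/\ forall (a : R) x y z, br (a *: x + y) z = a *: br x z + br y z,
      forall x y, br x y = - br y x &
      forall x y z, br x (br y z) + br y (br z x) + br z (br x y) = 0].

Definition two_step_nilpotent (br : V -> V -> V) : Prop :=
  [/\ is_lie_bracket br,
      forall x y z, br (br x y) z = 0 &
      exists x y, br x y != 0].

Definition center (br : V -> V -> V) (z : V) : Prop := forall x, br z x = 0.

(* Lorentzian: symmetric of signature (d-1,1) (Sylvester normal form) *)
Definition lorentzian (G : 'M[R]_d) : Prop :=
  G^T = G /\ exists P : 'M[R]_d, P \in unitmx /\
    exists i0 : 'I_d, P *m G *m P^T = diag_mx (\row_i (if i == i0 then -1 else 1)).

(* Levi-Civita connection on left-invariant fields (Koszul formula) *)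
Definition koszul (br : V -> V -> V) (G : 'M[R]_d) (x y z : V) : R :=
  2^-1 * (ipG G (br x y) z - ipG G (br y z) x + ipG G (br z x) y).

Definition nabla br G (x y : V) : V := dual G (koszul br G x y).

Definition curv br G (x y z : V) : V :=
  nabla br G x (nabla br G y z) - nabla br G y (nabla br G x z)
  - nabla br G (br x y) z.

(* Ricci tensor rho(x,y) = tr (z |-> R(z,x) y) *)
Definition ricci_form br G (x y : V) : R :=
  \sum_(i < d) (curv br G (ev i) x y) 0 i.

Definition Ric br G (x : V) : V := dual G (ricci_form br G x).

Definition is_derivation (br : V -> V -> V) (D : 'M[R]_d) : Prop :=
  forall x y, br x y *m D = br (x *m D) y + br x (y *m D).

Definition nilsoliton br G : Prop :=
  exists (c : R) (D : 'M[R]_d), is_derivation br D /\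
    forall x, Ric br G x = c *: x + x *m D.

Definition Jop br G (y x : V) : V := dual G (fun w => ipG G y (br x w)).

(* orthonormal basis (rows of B) adapted to n = Z (+) E, with signs eps *)
Definition adapted_orthonormal_basis (G ZM EM B : 'M[R]_d) (eps : 'rV[R]_d) : Prop :=
  [/\ B \in unitmx,
      forall i, eps 0 i = 1 \/ eps 0 i = -1,
      B *m G *m B^T = diag_mx eps &
      forall i, (row i B <= ZM)%MS \/ (row i B <= EM)%MS].

(* the involution iota: iota(row i B) = eps_i (row i B) *)
Definition iotaM (B : 'M[R]_d) (eps : 'rV[R]_d) : 'M[R]_d :=
  invmx B *m diag_mx eps *m B.

Definition jmap br G (I : 'M[R]_d) (y x : V) : V := Jop br G (y *m I) x *m I.

Definition pH_type br G (EM I : 'M[R]_d) : Prop :=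
  forall z, center br z -> forall x, (x <= EM)%MS ->
    jmap br G I z (jmap br G I z x) = - ipG G z (z *m I) *: x.

End MetricLie.

From Pilot Require Import Defs.
From HB Require Import structures.
From mathcomp Require Import all_boot all_order all_algebra.
From mathcomp Require Import reals.
From mathcomp Require Import ring lra zify.
Set Implicit Arguments. Unset Strict Implicit. Unset Printing Implicit Defensive.
Import Order.TTheory GRing.Theory Num.Theory.
Local Open Scope ring_scope.

(* In an orthonormal frame adapted to n = Z (+) E, the center Z being positive
   definite and the metric Lorentzian, E contains exactly one timelike frame
   vector e0, and iota is the reflection in e0^perp.  The pH-type identity then
   reads J_z^2 x = - <z,z> iota x + 2 <x, J_z e0> J_z e0 on E, which
   diagonalizes the Ricci operator: with f_k = J_{z_k} e0 and m = dim Z,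
   Ric e0 = (m/2) e0, Ric f_k = (1 - m/2) f_k, Ric = -(m/2) on the orthogonal
   complement W of e0 and the f_k in E, and Ric maps Z into Z.
   If Ric = c + D with D a derivation, Ricci eigenvalues add under the bracket
   (up to the shift 2c); as [e0, f_k] = z_k, the center has eigenvalue 1, so
   eigenvectors whose eigenvalues do not sum to 1 commute.  Hence W is central,
   i.e. W = 0, and for m >= 2 the f_k would commute pairwise, giving
   J_{z_j} f_k = 0 against J_{z_j}^2 f_k = - f_k.  So m = 1 and E is spanned by
   e0 and f_1.  Conversely, when m = 1 and n = 2, Ric is 1/2 on E and a scalar
   mu on Z, and Ric - (1 - mu) is a derivation. *)

Section LinearFunctions.
Variables (R : pzRingType) (U V : lmodType R) (f : U -> V).
Hypothesis f_lin : linear f.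

Lemma linear_fun0 : f 0 = 0.
Proof.
have := f_lin 1 0 0; rewrite scaler0 addr0 scale1r => f00.
by apply: (addrI (f 0)); rewrite addr0 -f00.
Qed.

Lemma linear_funZ a u : f (a *: u) = a *: f u.
Proof. by rewrite -[a *: u]addr0 f_lin linear_fun0 addr0. Qed.

Lemma linear_funD u v : f (u + v) = f u + f v.
Proof. by rewrite -[u]scale1r f_lin !scale1r. Qed.

Lemma linear_funN u : f (- u) = - f u.
Proof. by rewrite -scaleN1r linear_funZ scaleN1r. Qed.

Lemma linear_funB u v : f (u - v) = f u - f v.
Proof. by rewrite linear_funD linear_funN. Qed.

Lemma linear_fun_sum I r (P : pred I) (F : I -> U) :
  f (\sum_(i <- r | P i) F i) = \sum_(i <- r | P i) f (F i).
Proof. by elim/big_rec2: _ => [|i y1 y2 _ <-]; rewrite ?linear_fun0 ?linear_funD. Qed.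

End LinearFunctions.

Lemma scalar_row_expand (R : pzRingType) (d : nat) (a : 'rV[R]_d -> R) :
  scalar a -> forall w, a w = \sum_j w 0 j * a (delta_mx 0 j).
Proof.
move=> a_lin w; have a0 : a 0 = 0.
  have := a_lin 1 0 0; rewrite scaler0 addr0 mul1r => a00.
  by apply: (addrI (a 0)); rewrite addr0 -a00.
rewrite {1}[w]row_sum_delta; elim/big_rec2: _ => // j s v _ <-.
by rewrite a_lin.
Qed.

Lemma rank_le_span (F : fieldType) (p r d : nat) (M : 'M[F]_(p, d)) (v : 'I_r -> 'rV[F]_d) :
  (forall x, (x <= M)%MS -> exists a : 'I_r -> F, x = \sum_l a l *: v l) ->
  (\rank M <= r)%N.
Proof.
move=> span_v; apply: leq_trans (rank_leq_row (\matrix_l v l)); apply: mxrankS.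
apply/row_subP => i; have [a ->] := span_v _ (row_sub i M).
have -> : \sum_l a l *: v l = (\row_l a l) *m \matrix_l v l.
  by rewrite mulmx_sum_row; apply: eq_bigr => l _; rewrite rowK mxE.
exact: submxMl.
Qed.

Lemma submx_rows_comb (F : fieldType) (r d : nat) (v : 'I_r -> 'rV[F]_d) x :
  (x <= \matrix_l v l)%MS -> exists a : 'I_r -> F, x = \sum_l a l *: v l.
Proof.
move/submxP => [a ->]; exists (fun l => a 0 l); rewrite mulmx_sum_row.
by apply: eq_bigr => l _; rewrite rowK.
Qed.

(** * Scalar products given by a Gram matrix *)

Section LorentzianNilpotent.
Variables (R : realType) (d : nat) (G : 'M[R]_d).
Local Notation ip := (ipG G).
Local Notation V := 'rV[R]_d.
Local Notation ev := (@ev R d).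

Lemma ip_rows p (M : 'M[R]_(p, d)) i j : ip (row i M) (row j M) = (M *m G *m M^T) i j.
Proof.
rewrite /ipG !mxE; apply: eq_bigr => l _; rewrite !mxE; congr (_ * _).
by apply: eq_bigr => l' _; rewrite !mxE.
Qed.

Lemma ip_ev x j : ip x (ev j) = (x *m G) 0 j.
Proof.
rewrite /ipG /Defs.ev mxE (bigD1 j) //= !mxE /= eqxx mulr1.
rewrite [X in _ + X]big1 ?addr0 // => k /negPf kj.
by rewrite !mxE kj andbF mulr0.
Qed.

Lemma ipDl x y w : ip (x + y) w = ip x w + ip y w.
Proof. by rewrite /ipG !mulmxDl mxE. Qed.
Lemma ipZl a x w : ip (a *: x) w = a * ip x w.
Proof. by rewrite /ipG -!scalemxAl mxE. Qed.
Lemma ip0l w : ip 0 w = 0.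
Proof. by rewrite -(scale0r (0 : V)) ipZl mul0r. Qed.
Lemma ipNl x w : ip (- x) w = - ip x w.
Proof. by rewrite -scaleN1r ipZl mulN1r. Qed.
Lemma ipBl x y w : ip (x - y) w = ip x w - ip y w.
Proof. by rewrite ipDl ipNl. Qed.
Lemma ip_suml I r (P : pred I) (F : I -> V) w :
  ip (\sum_(i <- r | P i) F i) w = \sum_(i <- r | P i) ip (F i) w.
Proof. by elim/big_rec2: _ => [|i y1 y2 _ <-]; rewrite ?ip0l ?ipDl. Qed.

Lemma biorthogonal_rank r p (v w : 'I_r -> V) (M : 'M[R]_(p, d)) :
  (forall l m, ip (v l) (w m) = (l == m)%:R) -> (forall l, (v l <= M)%MS) ->
  (r <= \rank M)%N.
Proof.
move=> vw vM; pose C : 'M[R]_(d, r) := \matrix_(j, m) (G *m (w m)^T) j 0.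
have vC : (\matrix_l v l) *m C = 1%:M.
  apply/matrixP => l m; rewrite !mxE -vw /ipG -mulmxA mxE; apply: eq_bigr => j _.
  by rewrite !mxE.
have /eqP <- : row_free (\matrix_l v l) by apply/row_freeP; exists C.
by apply: mxrankS; apply/row_subP => l; rewrite rowK.
Qed.

Hypothesis G_sym : G^T = G.

Lemma ipC x y : ip x y = ip y x.
Proof.
rewrite /ipG; have -> : (x *m G *m y^T) 0 0 = (x *m G *m y^T)^T 0 0 by rewrite [RHS]mxE.
by rewrite !trmx_mul trmxK G_sym mulmxA.
Qed.

Lemma ipDr x y w : ip w (x + y) = ip w x + ip w y.
Proof. by rewrite ipC ipDl !(ipC w). Qed.
Lemma ipZr a x w : ip w (a *: x) = a * ip w x.
Proof. by rewrite ipC ipZl ipC. Qed.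
Lemma ip0r w : ip w 0 = 0.
Proof. by rewrite ipC ip0l. Qed.
Lemma ipNr x w : ip w (- x) = - ip w x.
Proof. by rewrite ipC ipNl ipC. Qed.
Lemma ip_sumr I r (P : pred I) (F : I -> V) w :
  ip w (\sum_(i <- r | P i) F i) = \sum_(i <- r | P i) ip w (F i).
Proof. by rewrite ipC ip_suml; apply: eq_bigr => i _; rewrite ipC. Qed.

Lemma ip_orthogonal_sum r (v : 'I_r -> V) (c a : 'I_r -> R) :
  (forall l m, ip (v l) (v m) = (l == m)%:R * c l) ->
  ip (\sum_l a l *: v l) (\sum_l a l *: v l) = \sum_l c l * a l ^+ 2.
Proof.
move=> v_orth; rewrite ip_suml; apply: eq_bigr => l _.
rewrite ipZl ip_sumr (bigD1 l) //= big1 => [|m /negPf ml]; last first.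
  by rewrite ipZr v_orth eq_sym ml mul0r mulr0.
by rewrite ipZr v_orth eqxx mul1r addr0; ring.
Qed.

Hypothesis G_unit : G \in unitmx.

Lemma dual_ipE (a : V -> R) : scalar a -> forall w, ip (dual G a) w = a w.
Proof.
move=> a_lin w; rewrite /ipG /dual -(mulmxA _ (invmx G)) mulVmx // mulmx1 mxE.
by rewrite (scalar_row_expand a_lin); apply: eq_bigr => j _; rewrite !mxE mulrC.
Qed.

Lemma ipl_inj u v : (forall w, ip u w = ip v w) -> u = v.
Proof.
move=> uv; have : u *m G = v *m G by apply/rowP => j; rewrite -!ip_ev uv.
by move=> /(congr1 (mulmx^~ (invmx G))); rewrite -!mulmxA mulmxV // !mulmx1.
Qed.

Lemma ipl_eq0 u : (forall w, ip u w = 0) -> u = 0.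
Proof. by move=> u0; apply: ipl_inj => w; rewrite u0 ip0l. Qed.

(** * Lorentzian forms and orthonormal frames *)

Hypothesis G_lor : lorentzian G.

(* Witness: the span of the Sylvester basis vectors other than the timelike one. *)
Lemma lorentzian_psd_hyperplane :
  exists M : 'M[R]_d, (d <= \rank M + 1)%N /\ forall x, (x <= M)%MS -> 0 <= ip x x.
Proof.
case: G_lor => _ [P [P_unit [i0 PGP]]].
pose v l := if l == i0 then 0 else row l P.
have v_orth l m : ip (v l) (v m) = (l == m)%:R * (if l == i0 then 0 else 1).
  rewrite /v; have [->|li0] := eqVneq l i0; first by rewrite ip0l mulr0.
  have [->|mi0] := eqVneq m i0; first by rewrite ip0r (negPf li0) mul0r.
  by rewrite (ip_rows P) PGP !mxE (negPf li0) mulr1.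
exists (\matrix_l v l); split.
  have P_sub : (P <= \matrix_l v l + row i0 P)%MS.
    apply/row_subP => l; have [->|li0] := eqVneq l i0; first exact: addsmxSr.
    apply: submx_trans (addsmxSl _ _).
    have -> : row l P = v l by rewrite /v (negPf li0).
    by rewrite -(rowK v) row_sub.
  rewrite -{1}(mxrank_unit P_unit); apply: leq_trans (mxrankS P_sub) _.
  apply: leq_trans (mxrank_adds_leqif _ _).1 _; rewrite leq_add2l.
  exact: rank_leq_row.
move=> x /submx_rows_comb [a ->]; rewrite (ip_orthogonal_sum _ v_orth).
by apply: sumr_ge0 => l _; case: (l == i0); rewrite ?mul0r // mul1r sqr_ge0.
Qed.

Lemma lorentzian_no_timelike_pair u1 u2 :
  ip u1 u1 = -1 -> ip u2 u2 = -1 -> ip u1 u2 = 0 -> False.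
Proof.
move=> u11 u22 u12; have [M [rM M_psd]] := lorentzian_psd_hyperplane.
pose u (l : 'I_2) := if l == 0 then u1 else u2.
have u_orth l m : ip (u l) (u m) = (l == m)%:R * -1.
  rewrite /u; case: l m => [[|[|l]] hl] [[|[|m]] hm] //=;
    by rewrite ?mul1r ?mul0r // ipC.
pose N := \matrix_l u l.
have rN : (2 <= \rank N)%N.
  apply: (biorthogonal_rank (v := u) (w := fun m => - u m)) => [l m|l].
    by rewrite /= ipNr u_orth mulrN1 opprK.
  by rewrite -(rowK u) row_sub.
have MN0 : (M :&: N = 0)%MS.
  apply/eqP; rewrite -submx0; apply/row_subP => i; set x := row i _.
  have xM : (x <= M)%MS by apply: submx_trans (row_sub _ _) (capmxSl _ _).
  have /submx_rows_comb [a xa] : (x <= N)%MS.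
    exact: submx_trans (row_sub _ _) (capmxSr _ _).
  have xx : ip x x = - \sum_l a l ^+ 2.
    rewrite {1 2}xa (ip_orthogonal_sum _ u_orth) -sumrN.
    by apply: eq_bigr => l _; rewrite mulN1r.
  have a2_le0 : \sum_l a l ^+ 2 <= 0 by rewrite -oppr_ge0 -xx M_psd.
  have a0 l : a l = 0.
    apply/eqP; rewrite -sqrf_eq0; apply/eqP.
    apply: (@psumr_eq0P _ _ predT (fun l => a l ^+ 2)) => //.
      by move=> k _; apply: sqr_ge0.
    by apply/eqP; rewrite eq_le a2_le0 sumr_ge0 // => k _; apply: sqr_ge0.
  by rewrite xa big1 ?sub0mx // => l _; rewrite a0 scale0r.
have := mxrank_disjoint_sum MN0; have := rank_leq_col (M + N)%MS; lia.
Qed.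

Variables (B : 'M[R]_d) (eps : 'rV[R]_d).
Hypothesis B_unit : B \in unitmx.
Hypothesis eps_sign : forall i, eps 0 i = 1 \/ eps 0 i = -1.
Hypothesis BGB : B *m G *m B^T = diag_mx eps.
Local Notation b i := (row i B).
Local Notation e i := (eps 0 i).
Local Notation iota := (iotaM B eps).

Lemma eps_sqr i : e i * e i = 1.
Proof. by case: (eps_sign i) => ->; rewrite ?mulrNN mulr1. Qed.

Lemma ip_frame i k : ip (b i) (b k) = (i == k)%:R * e i.
Proof. by rewrite ip_rows BGB mxE mulrC mulr_natr. Qed.

Lemma ip_frame_diag i : ip (b i) (b i) = e i.
Proof. by rewrite ip_frame eqxx mul1r. Qed.

Lemma frame_row_neq0 i : b i != 0.
Proof.
apply/eqP => bi0; have := ip_frame_diag i; rewrite bi0 ip0l.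
by case: (eps_sign i) => -> /eqP; rewrite eq_sym ?oppr_eq0 oner_eq0.
Qed.

Lemma diag_eps_sqr : diag_mx eps *m diag_mx eps = 1%:M.
Proof.
apply/matrixP => i j; rewrite mul_diag_mx !mxE.
by case: (i == j); rewrite ?mulr1n ?mulr0n ?mulr0 // eps_sqr.
Qed.

Lemma frame_form_unit : G \in unitmx.
Proof.
have /mulmx1_unit[] : (B *m G *m B^T) *m diag_mx eps = 1%:M by rewrite BGB diag_eps_sqr.
by rewrite !unitmx_mul => /andP[/andP[_ G_inv] _] _; exact: G_inv.
Qed.

Lemma frame_expand v : v = \sum_i (e i * ip v (b i)) *: b i.
Proof.
have G_inv : G *m B^T *m diag_mx eps *m B = 1%:M.
  by apply: mulmx1C; rewrite !mulmxA BGB diag_eps_sqr.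
have -> : \sum_i (e i * ip v (b i)) *: b i = v *m G *m B^T *m diag_mx eps *m B.
  rewrite mulmx_sum_row; apply: eq_bigr => i _; congr (_ *: _).
  rewrite mul_mx_diag mxE mulrC; congr (_ * _).
  by rewrite /ipG !mxE; apply: eq_bigr => j _; rewrite !mxE.
by rewrite -!mulmxA !(mulmxA G) !(mulmxA _ (diag_mx eps)) G_inv mulmx1.
Qed.

Lemma frame_parseval u v : ip u v = \sum_i e i * ip u (b i) * ip (b i) v.
Proof.
rewrite {1}[v]frame_expand ip_sumr; apply: eq_bigr => i _.
by rewrite ipZr (ipC _ v); ring.
Qed.

Lemma frame_trace (f : V -> V) : linear f ->
  \sum_j f (ev j) 0 j = \sum_i e i * ip (f (b i)) (b i).
Proof.
move=> f_lin; have f_ev j : f (ev j) = \sum_i (e i * ip (ev j) (b i)) *: f (b i).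
  rewrite {1}[ev j]frame_expand (linear_fun_sum f_lin).
  by apply: eq_bigr => i _; rewrite (linear_funZ f_lin).
have ip_ev_expand u w : ip u w = \sum_j u 0 j * ip (ev j) w.
  by apply: (scalar_row_expand (a := ip^~ w)) => k x y; rewrite ipDl ipZl.
under eq_bigr => j _ do rewrite f_ev summxE.
rewrite exchange_big /=; apply: eq_bigr => i _.
by rewrite ip_ev_expand mulr_sumr; apply: eq_bigr => j _; rewrite mxE; ring.
Qed.

Lemma iota_frame i : b i *m iota = e i *: b i.
Proof.
rewrite /iotaM !mulmxA -row_mul mulmxV // row1.
have -> : (delta_mx 0 i : V) *m diag_mx eps = e i *: delta_mx 0 i.
  apply/rowP => j; rewrite mul_mx_diag !mxE.
  by case: (j =P i) => [->|_]; rewrite ?mulr1 ?mul1r ?mul0r ?mulr0.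
by rewrite -scalemxAl -rowE.
Qed.

Lemma iota_expand (v : V) : v *m iota = \sum_i ip v (b i) *: b i.
Proof.
rewrite {1}[v]frame_expand mulmx_suml; apply: eq_bigr => i _.
by rewrite -scalemxAl iota_frame scalerA mulrAC eps_sqr mul1r.
Qed.

Lemma iotaK (v : V) : v *m iota *m iota = v.
Proof.
rewrite /iotaM -!mulmxA [B *m (invmx B *m _)]mulmxA mulmxV // mul1mx.
by rewrite [diag_mx eps *m (diag_mx eps *m _)]mulmxA diag_eps_sqr mul1mx mulVmx ?mulmx1.
Qed.

Lemma frame_timelike : exists k, e k = -1.
Proof.
case: G_lor => _ [P [_ [i0 PGP]]].
case: (pickP (fun k => e k == -1)) => [k /eqP ek|e_pos]; first by exists k.
have e1 k : e k = 1 by case: (eps_sign k) => // ek; have := e_pos k; rewrite ek eqxx.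
have := ip_rows P i0 i0; rewrite PGP !mxE eqxx mulr1n frame_parseval.
under eq_bigr => i _ do rewrite e1 mul1r [ip (b i) _]ipC.
have : 0 <= \sum_i ip (row i0 P) (b i) * ip (row i0 P) (b i).
  by apply: sumr_ge0 => i _; rewrite -expr2 sqr_ge0.
by move=> /[swap] ->; rewrite ler0N1.
Qed.

Lemma frame_timelike_unique k1 k2 : e k1 = -1 -> e k2 = -1 -> k1 = k2.
Proof.
move=> ek1 ek2; apply/eqP/contraT => k12; exfalso.
apply: (lorentzian_no_timelike_pair (u1 := b k1) (u2 := b k2)).
- by rewrite ip_frame_diag.
- by rewrite ip_frame_diag.
- by rewrite ip_frame (negPf k12) mul0r.
Qed.

Variable k0 : 'I_d.
Hypothesis e_k0 : e k0 = -1.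

Lemma frame_spacelike i : i != k0 -> e i = 1.
Proof.
move=> ik0; case: (eps_sign i) => // ei.
by rewrite (frame_timelike_unique ei e_k0) eqxx in ik0.
Qed.

Lemma iota_reflection (v : V) : v *m iota = v + (2 * ip v (b k0)) *: b k0.
Proof.
rewrite iota_expand {2}[v]frame_expand (bigD1 k0) //= [X in _ = X + _](bigD1 k0) //= e_k0.
have -> : \sum_(i < d | i != k0) (e i * ip v (b i)) *: b i =
          \sum_(i < d | i != k0) ip v (b i) *: b i.
  by apply: eq_bigr => i ik0; rewrite frame_spacelike // mul1r.
by rewrite addrAC -scalerDl; congr (_ *: _ + _); ring.
Qed.

Lemma ip_orth_timelike_neq0 w : ip w (b k0) = 0 -> w != 0 -> ip w w != 0.
Proof.
move=> w_e0 w_neq0; have ww : ip w w = \sum_i ip w (b i) ^+ 2.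
  have := iota_expand w; rewrite iota_reflection w_e0 mulr0 scale0r addr0 => {2}->.
  by rewrite ip_sumr; apply: eq_bigr => i _; rewrite ipZr expr2.
apply: contra w_neq0; rewrite ww => /eqP w2.
have w_b i : ip w (b i) = 0.
  apply/eqP; rewrite -sqrf_eq0; apply/eqP.
  by apply: (@psumr_eq0P _ _ predT (fun i => ip w (b i) ^+ 2)) => // k _; apply: sqr_ge0.
by apply/eqP; rewrite [w]frame_expand big1 // => i _; rewrite w_b mulr0 scale0r.
Qed.

(** * Levi-Civita connection of a 2-step nilpotent metric Lie algebra *)

Variable br : 'rV[R]_d -> 'rV[R]_d -> 'rV[R]_d.
Hypothesis br_nil : two_step_nilpotent br.
Local Notation cen := (center br).
Local Notation J := (Jop br G).
Local Notation N := (nabla br G).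
Local Notation K := (koszul br G).

Definition orthZ (x : V) := forall z, cen z -> ip x z = 0.

Lemma br_linearl y : linear (br^~ y).
Proof. by case: br_nil => [[br_lin _ _] _ _] a u v; apply: br_lin. Qed.
Lemma br_skew x y : br x y = - br y x.
Proof. by case: br_nil => [[]]. Qed.
Lemma center_br x y : cen (br x y).
Proof. by case: br_nil => _ brbr _ z; apply: brbr. Qed.
Lemma br_linearr x : linear (br x).
Proof. by move=> a y z; rewrite [LHS]br_skew br_linearl opprD -scalerN -!br_skew. Qed.
Lemma br_center x z : cen z -> br x z = 0.
Proof. by move=> z_cen; rewrite br_skew z_cen oppr0. Qed.
Lemma brxx x : br x x = 0.
Proof.
have xx2 : br x x + br x x = 0 by rewrite {1}br_skew addNr.
have : 2%:R *: br x x = 0 by rewrite scaler_nat mulr2n.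
by move/eqP; rewrite scaler_eq0 pnatr_eq0 => /eqP.
Qed.

Lemma center_lin a z z' : cen z -> cen z' -> cen (a *: z + z').
Proof. by move=> z_cen z'_cen x; rewrite br_linearl z_cen z'_cen scaler0 addr0. Qed.
Lemma center0 : cen 0.
Proof. by move=> x; rewrite (linear_fun0 (br_linearl x)). Qed.
Lemma centerZ a z : cen z -> cen (a *: z).
Proof. by move=> z_cen; rewrite -[_ *: _]addr0; apply: center_lin center0. Qed.
Lemma centerD z z' : cen z -> cen z' -> cen (z + z').
Proof. by move=> ??; rewrite -[z]scale1r; apply: center_lin. Qed.
Lemma center_sum I r (P : pred I) (F : I -> V) :
  (forall i, P i -> cen (F i)) -> cen (\sum_(i <- r | P i) F i).
Proof.
by move=> F_cen; elim/big_rec: _ => [|i y Pi]; [exact: center0 | apply: centerD; apply: F_cen].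
Qed.

Lemma orthZ_lin a x y : orthZ x -> orthZ y -> orthZ (a *: x + y).
Proof. by move=> x_E y_E z z_cen; rewrite ipDl ipZl x_E // y_E // mulr0 addr0. Qed.
Lemma orthZ0 : orthZ 0.
Proof. by move=> z _; rewrite ip0l. Qed.
Lemma orthZZ a x : orthZ x -> orthZ (a *: x).
Proof. by move=> x_E; rewrite -[_ *: _]addr0; apply: orthZ_lin orthZ0. Qed.
Lemma orthZD x y : orthZ x -> orthZ y -> orthZ (x + y).
Proof. by move=> ??; rewrite -[x]scale1r; apply: orthZ_lin. Qed.
Lemma orthZB x y : orthZ x -> orthZ y -> orthZ (x - y).
Proof. by move=> ? y_E; apply: orthZD => //; rewrite -scaleN1r; apply: orthZZ. Qed.
Lemma orthZ_sum I r (P : pred I) (F : I -> V) :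
  (forall i, P i -> orthZ (F i)) -> orthZ (\sum_(i <- r | P i) F i).
Proof.
by move=> F_E; elim/big_rec: _ => [|i y Pi]; [exact: orthZ0 | apply: orthZD; apply: F_E].
Qed.

Lemma ip_center_orthZ z x : cen z -> orthZ x -> ip z x = 0.
Proof. by move=> z_cen x_E; rewrite ipC x_E. Qed.

Lemma ipJ y x w : ip (J y x) w = ip y (br x w).
Proof. by apply: dual_ipE => // a u v; rewrite br_linearr ipDr ipZr. Qed.

Lemma Jop_linear y : linear (J y).
Proof.
move=> a u v; apply: ipl_inj => w.
by rewrite ipDl ipZl !ipJ br_linearl ipDr ipZr.
Qed.
Lemma Jop_linearl x : linear (J^~ x).
Proof.
move=> a u v; apply: ipl_inj => w.
by rewrite ipDl ipZl !ipJ ipDl ipZl.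
Qed.
Lemma Jop_orthZ y x : orthZ (J y x).
Proof. by move=> z z_cen; rewrite ipJ br_center // ip0r. Qed.
Lemma Jop_orthZ_eq0 y x : orthZ y -> J y x = 0.
Proof. by move=> y_E; apply: ipl_eq0 => w; rewrite ipJ y_E //; apply: center_br. Qed.
Lemma Jop_skew y x w : ip (J y x) w = - ip x (J y w).
Proof. by rewrite [ip x _]ipC !ipJ [br w x]br_skew ipNr opprK. Qed.

Lemma ip_nabla x y w : ip (N x y) w = K x y w.
Proof.
apply: dual_ipE => // a u v; rewrite /koszul.
by rewrite ipDr ipZr br_linearr br_linearl !ipDl !ipZl; ring.
Qed.

Lemma nabla_linearl y : linear (N^~ y).
Proof.
move=> a u v; apply: ipl_inj => w; rewrite ipDl ipZl !ip_nabla /koszul.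
by rewrite br_linearl !ipDl !ipZl !ipDr !ipZr br_linearr !ipDl !ipZl; ring.
Qed.
Lemma nabla_linearr x : linear (N x).
Proof.
move=> a u v; apply: ipl_inj => w; rewrite ipDl ipZl !ip_nabla /koszul.
by rewrite br_linearr br_linearl !ipDl !ipZl !ipDr !ipZr; ring.
Qed.

Let linear_combine3 (a : R) (u u' c1 c2 c3 c4 : V) :
  a *: u + u' - (a *: c1 + c2) - (a *: c3 + c4) = a *: (u - c1 - c3) + (u' - c2 - c4).
Proof.
apply: ipl_inj => w; rewrite !(ipBl, ipDl, ipZl, ipNl).
by move: (ip u w) (ip u' w) (ip c1 w) (ip c2 w) (ip c3 w) (ip c4 w) => *; ring.
Qed.

Lemma curv_linear1 x y : linear (fun u => curv br G u x y).
Proof.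
by move=> a u v; rewrite /curv br_linearl !nabla_linearl nabla_linearr; apply: linear_combine3.
Qed.
Lemma curv_linear2 u y : linear (fun x => curv br G u x y).
Proof.
by move=> a x x'; rewrite /curv br_linearr !nabla_linearl nabla_linearr; apply: linear_combine3.
Qed.
Lemma curv_linear3 u x : linear (curv br G u x).
Proof. by move=> a y y'; rewrite /curv !nabla_linearr; apply: linear_combine3. Qed.

Lemma ip_Ric x w : ip (Ric br G x) w = ricci_form br G x w.
Proof.
apply: dual_ipE => // a y y'; rewrite /ricci_form mulr_sumr -big_split /=.
by apply: eq_bigr => i _; rewrite curv_linear3 !mxE.
Qed.

Lemma Ric_linear : linear (Ric br G).
Proof.
move=> a u v; apply: ipl_inj => w.
rewrite ipDl ipZl !ip_Ric /ricci_form mulr_sumr -big_split /=.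
by apply: eq_bigr => i _; rewrite curv_linear2 !mxE.
Qed.

Lemma ip_curv_orthZ u x y : cen u \/ orthZ u -> orthZ x ->
  ip (curv br G u x y) u = 4^-1 * (ip (J u y) (J u x) + ip (J y u) (J u x))
     - 3%:R / 4%:R * ip (br u y) (br u x).
Proof.
move=> u_ZE x_E.
have ip_br_u v : ip (br u v) u = 0.
  by case: u_ZE => u_E; rewrite ?u_E ?ip0l // ipC u_E //; apply: center_br.
have NN_u : ip (N u (N x y)) u = 0.
  by rewrite ip_nabla /koszul brxx ip0l [br _ u]br_skew ipNl ip_br_u oppr0 subr0 addr0 mulr0.
have K_J : K u y (J u x) = - 2^-1 * (ip (J u y) (J u x) + ip (J y u) (J u x)).
  rewrite /koszul ip_center_orthZ; [|exact: center_br|exact: Jop_orthZ].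
  rewrite [ip (br y _) u]ipC -ipJ [ip (br _ u) y]ipC [br _ u]br_skew ipNr -ipJ.
  by move: (ip (J u y) _) (ip (J y u) _) => p q; ring.
have K_br : K u y (br u x) = 2^-1 * ip (br u y) (br u x).
  rewrite /koszul [br y (br u x)]br_center; last exact: center_br.
  by rewrite (center_br u x) !ip0l subr0 addr0.
have NN_x : ip (N x (N u y)) u = 2^-1 * (K u y (J u x) + K u y (br u x)).
  rewrite ip_nabla /koszul (ip_center_orthZ (center_br _ _) x_E) subr0.
  by rewrite [ip (br x _) u]ipC -ipJ [ip (J _ _) _]ipC ip_nabla [ip (br u x) _]ipC ip_nabla.
have N_br : ip (N (br u x) y) u = 2^-1 * ip (br u y) (br u x).
  rewrite ip_nabla /koszul (center_br u x) ip0l (br_center _ (center_br _ _)) ip0l addr0 sub0r.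
  by rewrite [br y u]br_skew ipNl opprK.
rewrite /curv !ipBl NN_u NN_x N_br K_J K_br.
by move: (ip (J u y) _) (ip (J y u) _) (ip (br u y) _) => p q t; field.
Qed.

Lemma ip_curv_center u z x : cen u \/ orthZ u -> cen z -> orthZ x ->
  ip (curv br G u z x) u = 4^-1 * ip (J z u) (J u x).
Proof.
move=> u_ZE z_cen x_E.
have ip_br_u v : ip (br u v) u = 0.
  by case: u_ZE => u_E; rewrite ?u_E ?ip0l // ipC u_E //; apply: center_br.
have NN_u : ip (N u (N z x)) u = 0.
  by rewrite ip_nabla /koszul brxx ip0l [br _ u]br_skew ipNl ip_br_u oppr0 subr0 addr0 mulr0.
have N_br : N (br u z) x = 0 by rewrite br_center // (linear_fun0 (nabla_linearl x)).
have K_J : K u x (J z u) = - 2^-1 * ip (J z u) (J u x).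
  rewrite /koszul ip_center_orthZ; [|exact: center_br|exact: Jop_orthZ].
  rewrite [ip (br _ u) x](ip_center_orthZ (center_br _ _) x_E) addr0 sub0r.
  by rewrite [ip (br x _) u]ipC -ipJ ipC mulrN mulNr.
have NN_z : ip (N z (N u x)) u = 2^-1 * K u x (J z u).
  rewrite ip_nabla /koszul z_cen ip0l sub0r (br_center _ z_cen) ip0l addr0.
  by rewrite [ip (br _ u) z]ipC -ipJ Jop_skew opprK ip_nabla.
rewrite /curv !ipBl NN_u NN_z N_br ip0l K_J.
by move: (ip (J z u) _) => p; field.
Qed.

(** * The Ricci operator in an adapted frame *)

Variable inZ : pred 'I_d.
Hypothesis frameZ : forall i, inZ i -> cen (b i).
Hypothesis frameE : forall i, ~~ inZ i -> orthZ (b i).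
Hypothesis center_pos : forall z, cen z -> z != 0 -> 0 < ip z z.

Lemma frame_adapted i : cen (b i) \/ orthZ (b i).
Proof. by case Zi: (inZ i); [left; apply: frameZ | right; apply: frameE; rewrite Zi]. Qed.

Lemma ricci_frame x y : ricci_form br G x y = \sum_i e i * ip (curv br G (b i) x y) (b i).
Proof. by rewrite /ricci_form (frame_trace (curv_linear1 x y)). Qed.

Lemma sum_Jop_cross y x : \sum_i e i * ip (J y (b i)) (J (b i) x) = 0.
Proof.
rewrite (eq_bigr (fun i => - \sum_k e i * (e k * (ip (J y (b k)) (b i) * ip (b i) (br x (b k))))));
  last first.
  move=> i _; rewrite frame_parseval mulr_sumr -sumrN; apply: eq_bigr => k _.
  rewrite (ipJ y (b i) (b k)) [br (b i) _]br_skew ipNr -(ipJ y (b k) (b i)).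
  by rewrite [ip (b k) _]ipC (ipJ (b i) x (b k)); ring.
rewrite sumrN exchange_big /= big1 ?oppr0 // => k _.
have -> : \sum_i e i * (e k * (ip (J y (b k)) (b i) * ip (b i) (br x (b k)))) =
          e k * ip (J y (b k)) (br x (b k)).
  by rewrite [in RHS]frame_parseval mulr_sumr; apply: eq_bigr => i _; ring.
by rewrite (Jop_orthZ _ _ (center_br _ _)) mulr0.
Qed.

Lemma sum_br_frame y x : \sum_i e i * ip (br (b i) y) (br (b i) x) =
   \sum_k e k * ip (J (b k) y) (J (b k) x).
Proof.
rewrite (eq_bigr (fun i => \sum_k e i * (e k * (ip (J (b k) y) (b i) * ip (b i) (J (b k) x)))));
  last first.
  move=> i _; rewrite frame_parseval mulr_sumr; apply: eq_bigr => k _.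
  rewrite [ip (br _ y) _]ipC ![br (b i) _]br_skew !ipNr -!ipJ.
  by rewrite [ip (b i) (J _ x)]ipC; ring.
rewrite exchange_big /=; apply: eq_bigr => k _.
by rewrite [in RHS]frame_parseval mulr_sumr; apply: eq_bigr => i _; ring.
Qed.

Lemma ricci_orthZ x y : orthZ x ->
  ricci_form br G x y = - 2^-1 * \sum_k e k * ip (J (b k) y) (J (b k) x).
Proof.
move=> x_E; rewrite ricci_frame.
under eq_bigr => i _ do rewrite (ip_curv_orthZ y (frame_adapted i) x_E).
have -> : \sum_i e i * (4^-1 * (ip (J (b i) y) (J (b i) x) + ip (J y (b i)) (J (b i) x))
     - 3%:R / 4%:R * ip (br (b i) y) (br (b i) x)) =
  4^-1 * (\sum_i e i * ip (J (b i) y) (J (b i) x))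
  + 4^-1 * (\sum_i e i * ip (J y (b i)) (J (b i) x))
  - 3%:R / 4%:R * (\sum_i e i * ip (br (b i) y) (br (b i) x)).
  rewrite !mulr_sumr -sumrN -!big_split /=; apply: eq_bigr => i _.
  by move: (ip (J (b i) y) _) (ip (J y (b i)) _) (ip (br (b i) y) _) => p q t; ring.
rewrite sum_Jop_cross sum_br_frame.
by move: (\sum_k _) => t; field.
Qed.

Lemma ricci_center_orthZ z x : cen z -> orthZ x -> ricci_form br G z x = 0.
Proof.
move=> z_cen x_E; rewrite ricci_frame.
under eq_bigr => i _ do rewrite (ip_curv_center (frame_adapted i) z_cen x_E).
rewrite (eq_bigr (fun i => 4^-1 * (e i * ip (J z (b i)) (J (b i) x)))) => [|i _]; last first.
  by move: (ip _ _) => p; ring.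
by rewrite -mulr_sumr sum_Jop_cross mulr0.
Qed.

Lemma center_orthZ_eq0 z : cen z -> orthZ z -> z = 0.
Proof.
move=> z_cen z_E; apply/eqP/contraT => z_neq0.
by have := center_pos z_cen z_neq0; rewrite z_E // ltxx.
Qed.

Lemma eps_center i : inZ i -> e i = 1.
Proof.
move=> Zi; have := center_pos (frameZ Zi) (frame_row_neq0 i).
by rewrite ip_frame_diag; case: (eps_sign i) => -> //; rewrite ltr0N1.
Qed.

Lemma Ric_orthZ x : orthZ x -> Ric br G x = 2^-1 *: \sum_(k | inZ k) J (b k) (J (b k) x).
Proof.
move=> x_E; apply: ipl_inj => w.
rewrite ip_Ric ricci_orthZ // ipZl ip_suml (bigID inZ) /=.
rewrite [X in _ + X]big1 => [|k /frameE k_E]; last first.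
  by rewrite (Jop_orthZ_eq0 w k_E) ip0l mulr0.
rewrite addr0 !mulr_sumr; apply: eq_bigr => k Zk.
rewrite eps_center // Jop_skew (ipC w).
by move: (ip (J (b k) (J (b k) x)) w) => t; ring.
Qed.

Definition projZ (v : V) := \sum_(i | inZ i) (e i * ip v (b i)) *: b i.
Definition projE (v : V) := \sum_(i | ~~ inZ i) (e i * ip v (b i)) *: b i.

Lemma projZE v : v = projZ v + projE v.
Proof. by rewrite {1}[v]frame_expand (bigID inZ). Qed.

Lemma center_projZ v : cen (projZ v).
Proof. by apply: center_sum => i Zi; apply: centerZ; apply: frameZ. Qed.

Lemma orthZ_projE v : orthZ (projE v).
Proof. by apply: orthZ_sum => i E_i; apply: orthZZ; apply: frameE. Qed.

Lemma center_expand z : cen z -> z = \sum_(i | inZ i) ip z (b i) *: b i.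
Proof.
move=> z_cen; rewrite {1}[z]projZE /projE big1 ?addr0 => [|i /frameE i_E].
  by apply: eq_bigr => i Zi; rewrite eps_center // mul1r.
by rewrite (ip_center_orthZ z_cen i_E) mulr0 scale0r.
Qed.

Lemma orthZ_orth_center v : (forall x, orthZ x -> ip v x = 0) -> cen v.
Proof.
move=> v_orth; rewrite [v]projZE /projE big1 ?addr0 => [|i /frameE i_E].
  exact: center_projZ.
by rewrite v_orth // mulr0 scale0r.
Qed.

Lemma br_projE x y : br x y = br x (projE y).
Proof.
rewrite {1}[y]projZE (linear_funD (br_linearr x)) (br_center _ (center_projZ _)).
exact: add0r.
Qed.

(* [Ric - (1 - mu)] acts as [2 mu - 1] on Z and as [mu - 1/2] on E, and the
   bracket only sees E components. *)
Lemma nilsoliton_of_Ric_eigen mu :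
  (forall z, cen z -> Ric br G z = mu *: z) ->
  (forall x, orthZ x -> Ric br G x = 2^-1 *: x) -> nilsoliton br G.
Proof.
move=> Ric_Z Ric_E; pose c := 1 - mu.
have D_lin : linear (fun v => Ric br G v - c *: v).
  move=> a u v; apply: ipl_inj => w; rewrite Ric_linear !(ipDl, ipNl, ipZl).
  by move: (ip (Ric br G u) w) (ip (Ric br G v) w) (ip u w) (ip v w) => *; ring.
pose D : 'M[R]_d := \matrix_(i, k) (Ric br G (ev i) - c *: ev i) 0 k.
have vD v : v *m D = Ric br G v - c *: v.
  rewrite mulmx_sum_row {2 3}[v]row_sum_delta (linear_fun_sum D_lin).
  apply: eq_bigr => i _; rewrite (linear_funZ D_lin); congr (_ *: _).
  by apply/rowP => k; rewrite !mxE.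
exists c, D; split => [x y|v]; last by rewrite vD addrC subrK.
have br_Ric u v : br (Ric br G u) v = 2^-1 *: br u v.
  rewrite [u]projZE (linear_funD Ric_linear) (Ric_Z _ (center_projZ _)) (Ric_E _ (orthZ_projE _)).
  rewrite !(linear_funD (br_linearl v)) !(linear_funZ (br_linearl v)).
  by rewrite !center_projZ scaler0 !add0r.
rewrite !vD (Ric_Z _ (center_br x y)) (linear_funB (br_linearl y)) (linear_funB (br_linearr x)).
rewrite (linear_funZ (br_linearl y)) (linear_funZ (br_linearr x)).
rewrite br_Ric [br x (Ric _ _ _)]br_skew br_Ric.
apply: ipl_inj => w; rewrite !(ipDl, ipBl, ipZl, ipNl) [br y x]br_skew ipNl.
by rewrite /c; move: (ip (br x y) w) => t; field.
Qed.

(** * Metrics of pH-type *)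

Hypothesis pH : forall z, cen z -> forall x, orthZ x ->
  jmap br G iota z (jmap br G iota z x) = - ip z (z *m iota) *: x.
Local Notation e0 := (b k0).
Local Notation f k := (J (b k) e0).

Lemma timelike_not_center : ~~ inZ k0.
Proof. by apply/negP => /eps_center; rewrite e_k0 => ?; lra. Qed.

Lemma orthZ_e0 : orthZ e0.
Proof. exact: frameE timelike_not_center. Qed.

Lemma iota_center z : cen z -> z *m iota = z.
Proof.
by move=> z_cen; rewrite iota_reflection (ip_center_orthZ z_cen orthZ_e0) mulr0 scale0r addr0.
Qed.

Lemma iota_e0 : e0 *m iota = - e0.
Proof. by rewrite iota_frame // e_k0 scaleN1r. Qed.

Lemma ip_Jop_e0 z : ip (J z e0) e0 = 0.
Proof. by rewrite ipJ brxx ip0r. Qed.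

Lemma iota_Jop_e0 z : J z e0 *m iota = J z e0.
Proof. by rewrite iota_reflection ip_Jop_e0 mulr0 scale0r addr0. Qed.

(* The pH-type identity, read through the reflection [iota]. *)
Lemma Jop_sqr z x : cen z -> orthZ x ->
  J z (J z x) = - ip z z *: (x *m iota) + (2 * ip x (J z e0)) *: J z e0.
Proof.
move=> z_cen x_E; have := pH z_cen x_E; rewrite /jmap (iota_center z_cen).
move=> /(congr1 (mulmx^~ iota)); rewrite /= iotaK // -scalemxAl.
rewrite iota_reflection (linear_funD (Jop_linear z)) (linear_funZ (Jop_linear z)) Jop_skew => JJ.
apply: ipl_inj => w; have := congr1 (ip^~ w) JJ; rewrite /= !ipDl !ipZl.
move: (ip (J z (J z x)) w) (ip (J z e0) w) (ip x (J z e0)) (ip z z) (ip (x *m iota) w).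
by move=> p q t s v <-; ring.
Qed.

Lemma Jop_sqr_e0 z : cen z -> J z (J z e0) = ip z z *: e0.
Proof.
move=> z_cen; rewrite (Jop_sqr z_cen orthZ_e0) iota_e0 ipC ip_Jop_e0 mulr0 scale0r addr0.
by rewrite scalerN -scaleNr opprK.
Qed.

Lemma ip_Jop_e0_sqr z : cen z -> ip (J z e0) (J z e0) = ip z z.
Proof.
move=> z_cen; have := Jop_skew z (J z e0) e0; rewrite Jop_sqr_e0 // ipZl ip_frame_diag e_k0.
by move=> J2; apply: oppr_inj; rewrite -J2 mulrN1.
Qed.

Lemma ip_f j k : inZ j -> inZ k -> ip (f j) (f k) = (j == k)%:R.
Proof.
move=> Zj Zk; have [<-|jk] := eqVneq j k.
  by rewrite (ip_Jop_e0_sqr (frameZ Zj)) ip_frame_diag eps_center.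
have := ip_Jop_e0_sqr (centerD (frameZ Zj) (frameZ Zk)).
rewrite (linear_funD (Jop_linearl e0)) !ipDl !ipDr.
rewrite (ip_Jop_e0_sqr (frameZ Zj)) (ip_Jop_e0_sqr (frameZ Zk)) !ip_frame_diag.
rewrite !ip_frame (negPf jk) eq_sym (negPf jk) !mul0r (ipC (f k)).
by rewrite -[false%:R]/(0 : R); move: (ip (f j) (f k)) => t; lra.
Qed.

Lemma br_e0_f k : inZ k -> br e0 (f k) = b k.
Proof.
move=> Zk; rewrite (center_expand (center_br _ _)) (bigD1 k) //= big1 ?addr0.
  by rewrite ipC -ipJ ip_f // eqxx scale1r.
by move=> i /andP[Zi ik]; rewrite ipC -ipJ ip_f // (negPf ik) scale0r.
Qed.

Definition dimZ : R := \sum_(k | inZ k) 1.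

Lemma dimZ_ge1 j : inZ j -> 1 <= dimZ.
Proof. by move=> Zj; rewrite /dimZ (bigD1 j) //= lerDl sumr_ge0. Qed.

Lemma dimZ_ge2 j k : inZ j -> inZ k -> j != k -> 2 <= dimZ.
Proof.
move=> Zj Zk jk; rewrite /dimZ (bigD1 j) //= (bigD1 k) /=; last by rewrite Zk eq_sym jk.
by rewrite addrA lerDl sumr_ge0.
Qed.

Lemma Ric_orthZ_iota x : orthZ x ->
  Ric br G x = - (dimZ / 2) *: (x *m iota) + \sum_(k | inZ k) ip x (f k) *: f k.
Proof.
move=> x_E; rewrite Ric_orthZ //.
under eq_bigr => k Zk do rewrite (Jop_sqr (frameZ Zk) x_E) ip_frame_diag (eps_center Zk).
apply: ipl_inj => w; rewrite ipZl ipDl ipZl !ip_suml /dimZ.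
rewrite mulNr mulr_suml mulr_suml -sumrN mulr_sumr -big_split /=.
apply: eq_bigr => k Zk; rewrite ipDl !ipZl.
by move: (ip (x *m iota) w) (ip (f k) w) (ip x (f k)) => p q t; field.
Qed.

Lemma Ric_e0 : Ric br G e0 = (dimZ / 2) *: e0.
Proof.
rewrite (Ric_orthZ_iota orthZ_e0) iota_e0 big1 ?addr0 => [|k Zk]; last first.
  by rewrite ipC ip_Jop_e0 scale0r.
by rewrite scalerN scaleNr opprK.
Qed.

Lemma Ric_f j : inZ j -> Ric br G (f j) = (1 - dimZ / 2) *: f j.
Proof.
move=> Zj; rewrite (Ric_orthZ_iota (Jop_orthZ _ _)) iota_Jop_e0 (bigD1 j) //=.
rewrite big1 => [|k /andP[Zk kj]]; last by rewrite ip_f // eq_sym (negPf kj) scale0r.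
by rewrite ip_f // eqxx scale1r addr0 scalerBl scale1r addrC scaleNr.
Qed.

(* The component of [x] orthogonal to [e0] and to the [f k]; the sign of the
   [e0] term is that of a projection along a timelike unit vector. *)
Definition projW (x : V) := x + ip x e0 *: e0 - \sum_(k | inZ k) ip x (f k) *: f k.

Lemma orthZ_projW x : orthZ x -> orthZ (projW x).
Proof.
move=> x_E; apply: orthZB; first by apply: orthZD => //; apply: orthZZ orthZ_e0.
by apply: orthZ_sum => k _; apply/orthZZ/Jop_orthZ.
Qed.

Lemma ip_projW_e0 x : ip (projW x) e0 = 0.
Proof.
rewrite /projW ipBl ipDl ipZl ip_frame_diag e_k0 ip_suml big1 => [|k _].
  by rewrite subr0 mulrN1 subrr.
by rewrite ipZl ip_Jop_e0 mulr0.
Qed.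

Lemma ip_projW_f x j : inZ j -> ip (projW x) (f j) = 0.
Proof.
move=> Zj; rewrite /projW ipBl ipDl ipZl (ipC e0) ip_Jop_e0 mulr0 addr0 ip_suml.
rewrite (bigD1 j) //= big1 => [|k /andP[Zk kj]]; last by rewrite ipZl ip_f // (negPf kj) mulr0.
by rewrite ipZl ip_f // eqxx mulr1 addr0 subrr.
Qed.

Lemma projW_decomp x : x = projW x - ip x e0 *: e0 + \sum_(k | inZ k) ip x (f k) *: f k.
Proof. by apply: ipl_inj => w; rewrite /projW !(ipDl, ipNl); ring. Qed.

Lemma Ric_projW x : orthZ x -> Ric br G (projW x) = - (dimZ / 2) *: projW x.
Proof.
move=> x_E; rewrite (Ric_orthZ_iota (orthZ_projW x_E)) iota_reflection ip_projW_e0.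
rewrite mulr0 scale0r addr0 big1 ?addr0 // => k Zk.
by rewrite ip_projW_f // scale0r.
Qed.

Lemma exists_center_frame : exists j, inZ j.
Proof.
case: br_nil => _ _ [x [y xy]]; case: (pickP inZ) => [j Zj|noZ]; first by exists j.
by move: xy; rewrite (center_expand (center_br x y)) big_pred0 ?eqxx.
Qed.

(** * Nilsolitons *)

Section Nilsoliton.
Variables (c : R) (D : 'M[R]_d).
Hypothesis D_der : is_derivation br D.
Hypothesis Ric_cD : forall x, Ric br G x = c *: x + x *m D.

Lemma soliton_mulmx x : x *m D = Ric br G x - c *: x.
Proof. by rewrite Ric_cD addrC addKr. Qed.

Lemma soliton_br_eigen x y l m : Ric br G x = l *: x -> Ric br G y = m *: y ->
  br x y *m D = (l + m - 2 * c) *: br x y.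
Proof.
move=> Ric_x Ric_y; rewrite D_der !soliton_mulmx Ric_x Ric_y -!scalerBl.
rewrite (linear_funZ (br_linearl y)) (linear_funZ (br_linearr x)) -scalerDl.
by congr (_ *: _); ring.
Qed.

(* The center is spanned by the brackets [e0, f k], which have Ricci
   eigenvalue dimZ / 2 + (1 - dimZ / 2) = 1. *)
Lemma soliton_center z : cen z -> z *m D = (1 - 2 * c) *: z.
Proof.
have frame_D k : inZ k -> b k *m D = (1 - 2 * c) *: b k.
  by move=> Zk; rewrite -(br_e0_f Zk) (soliton_br_eigen Ric_e0 (Ric_f Zk)); congr (_ *: _); ring.
move=> z_cen; rewrite (center_expand z_cen) mulmx_suml scaler_sumr.
by apply: eq_bigr => i Zi; rewrite -scalemxAl frame_D // !scalerA mulrC.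
Qed.

Lemma soliton_br_eigen_eq0 x y l m : Ric br G x = l *: x -> Ric br G y = m *: y ->
  l + m != 1 -> br x y = 0.
Proof.
move=> Ric_x Ric_y lm1; have := soliton_br_eigen Ric_x Ric_y.
rewrite soliton_center; last exact: center_br.
move/eqP; rewrite -subr_eq0 -scalerBl scaler_eq0 => /orP[|/eqP //].
by rewrite (_ : _ - _ = 1 - (l + m)); [rewrite subr_eq0 eq_sym (negPf lm1) | ring].
Qed.

(* [projW x] has eigenvalue -dimZ/2, so it commutes with [e0], with every
   [f k] and with [projW]: it is central, hence zero. *)
Lemma soliton_projW x : orthZ x -> projW x = 0.
Proof.
move=> x_E; have [j Zj] := exists_center_frame; have dimZ1 := dimZ_ge1 Zj.
set w := projW x; have Ric_w := Ric_projW x_E.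
have br_w_e0 : br w e0 = 0.
  by apply: (soliton_br_eigen_eq0 Ric_w Ric_e0); rewrite addNr eq_sym oner_eq0.
have br_w_f k : inZ k -> br w (f k) = 0.
  move=> Zk; apply: (soliton_br_eigen_eq0 Ric_w (Ric_f Zk)).
  by apply/eqP => h; move: dimZ1; lra.
have br_w_W y : orthZ y -> br w (projW y) = 0.
  move=> y_E; apply: (soliton_br_eigen_eq0 Ric_w (Ric_projW y_E)).
  by apply/eqP => h; move: dimZ1; lra.
apply: (center_orthZ_eq0 _ (orthZ_projW x_E)) => y.
rewrite br_projE.
rewrite (projW_decomp (projE y)) (linear_funD (br_linearr w)) (linear_funB (br_linearr w)).
rewrite (linear_funZ (br_linearr w)) br_w_e0 scaler0 subr0 (br_w_W _ (orthZ_projE y)).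
rewrite (linear_fun_sum (br_linearr w)) big1 => [|k Zk]; first exact: addr0.
by rewrite (linear_funZ (br_linearr w)) br_w_f // scaler0.
Qed.

Lemma soliton_orthZ_span x : orthZ x ->
  x = - ip x e0 *: e0 + \sum_(k | inZ k) ip x (f k) *: f k.
Proof. by move=> x_E; rewrite {1}(projW_decomp x) soliton_projW // sub0r scaleNr. Qed.

Lemma soliton_center_frame_unique j k : inZ j -> inZ k -> j = k.
Proof.
move=> Zj Zk; apply/eqP/contraT => jk; have dimZ2 := dimZ_ge2 Zj Zk jk.
have br_f l : inZ l -> br (f k) (f l) = 0.
  move=> Zl; have [<-|kl] := eqVneq k l; first exact: brxx.
  by apply: (soliton_br_eigen_eq0 (Ric_f Zk) (Ric_f Zl)); apply/eqP => h; move: dimZ2; lra.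
have J_f : J (b j) (f k) = 0.
  apply: ipl_eq0 => y; rewrite ipJ br_projE.
  rewrite (soliton_orthZ_span (orthZ_projE y)).
  rewrite (linear_funD (br_linearr _)) (linear_funZ (br_linearr _)).
  rewrite [br (f k) e0]br_skew br_e0_f // (linear_fun_sum (br_linearr _)) big1 => [|l Zl].
    by rewrite addr0 ipZr ipNr ip_frame (negPf jk) mul0r oppr0 mulr0.
  by rewrite (linear_funZ (br_linearr _)) br_f // scaler0.
have := Jop_sqr (frameZ Zj) (Jop_orthZ (b k) e0).
rewrite J_f (linear_fun0 (Jop_linear _)) iota_Jop_e0 ip_frame_diag eps_center //.
rewrite ip_f // eq_sym (negPf jk) mulr0 scale0r addr0 scaleN1r => /eqP.
rewrite eq_sym oppr_eq0 => /eqP f0.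
by have := ip_f Zk Zk; rewrite f0 ip0l eqxx => /eqP; rewrite eq_sym oner_eq0.
Qed.

End Nilsoliton.

Section UniqueCenterFrame.
Variable j : 'I_d.
Hypothesis Zj : inZ j.
Hypothesis inZ_j : inZ =1 pred1 j.

Lemma Ric_center_line z : cen z -> Ric br G z = ip (Ric br G (b j)) (b j) *: z.
Proof.
have z_line v : cen v -> v = ip v (b j) *: b j.
  by move=> v_cen; rewrite {1}(center_expand v_cen) (big_pred1 j).
have Ric_cen v : cen v -> cen (Ric br G v).
  by move=> v_cen; apply: orthZ_orth_center => x x_E; rewrite ip_Ric ricci_center_orthZ.
move=> z_cen; rewrite {1}(z_line z z_cen) (linear_funZ Ric_linear).
by rewrite [in LHS](z_line _ (Ric_cen _ (frameZ Zj))) scalerA mulrC -scalerA -(z_line z z_cen).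
Qed.

Lemma Ric_orthZ_plane : (forall x, orthZ x -> projW x = 0) ->
  forall x, orthZ x -> Ric br G x = 2^-1 *: x.
Proof.
move=> W0; have dimZ1 : dimZ = 1 by rewrite /dimZ (big_pred1 j).
have span x : orthZ x -> x = - ip x e0 *: e0 + ip x (f j) *: f j.
  by move=> x_E; rewrite {1}(projW_decomp x) W0 // sub0r scaleNr (big_pred1 j).
move=> x x_E; rewrite {1}(span x x_E) (linear_funD Ric_linear) !(linear_funZ Ric_linear).
rewrite Ric_e0 (Ric_f Zj) dimZ1 {3}(span x x_E) scalerDr !scalerA.
by congr (_ *: _ + _ *: _); field.
Qed.

End UniqueCenterFrame.

Variables ZM EM : 'M[R]_d.
Hypothesis HZ : forall z, (z <= ZM)%MS <-> cen z.
Hypothesis HE : forall x, (x <= EM)%MS <-> orthZ x.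

Lemma rank_center_line j : inZ j -> inZ =1 pred1 j -> \rank ZM = 1%N.
Proof.
move=> Zj inZ_j; apply/eqP; rewrite eqn_leq; apply/andP; split.
  apply: (@rank_le_span _ _ 1 _ _ (fun=> b j)) => z /HZ z_cen.
  by exists (fun=> ip z (b j)); rewrite big_ord1 {1}(center_expand z_cen) (big_pred1 j).
apply: (biorthogonal_rank (v := fun=> b j) (w := fun=> b j)) => [l m|l].
  by rewrite !ord1 eqxx ip_frame_diag eps_center.
by apply/HZ/frameZ.
Qed.

Lemma center_line_of_rank j : \rank ZM = 1%N -> inZ j -> inZ =1 pred1 j.
Proof.
move=> rZ Zj k /=; apply/idP/eqP => [Zk|->//]; apply/eqP/contraT => kj.
pose v (l : 'I_2) := if l == 0 then b j else b k.
have : (2 <= \rank ZM)%N.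
  apply: (biorthogonal_rank (v := v) (w := v)) => [l m|l].
    rewrite /v; case: l m => [[|[|l]] ?] [[|[|m]] ?] //=;
      by rewrite ?ip_frame_diag ?eps_center // ip_frame ?(negPf kj) 1?eq_sym ?(negPf kj) mul0r.
  by apply/HZ; rewrite /v; case: (l == 0); apply: frameZ.
by rewrite rZ.
Qed.

Lemma rank_orthZ_plane j : inZ j -> inZ =1 pred1 j ->
  (forall x, orthZ x -> projW x = 0) -> \rank EM = 2%N.
Proof.
move=> Zj inZ_j W0; pose v (l : 'I_2) := if l == 0 then e0 else f j.
apply/eqP; rewrite eqn_leq; apply/andP; split.
  apply: (@rank_le_span _ _ 2 _ _ v) => x /HE x_E.
  exists (fun l => if l == 0 then - ip x e0 else ip x (f j)).
  by rewrite big_ord_recr big_ord1 /= {1}(projW_decomp x) W0 // sub0r scaleNr (big_pred1 j).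
apply: (biorthogonal_rank (v := v) (w := fun l => if l == 0 then - e0 else f j)) => [l m|l].
  rewrite /v; case: l m => [[|[|l]] ?] [[|[|m]] ?] //=.
  - by rewrite ipNr ip_frame_diag e_k0 opprK.
  - by rewrite ipC ip_Jop_e0.
  - by rewrite ipNr ip_Jop_e0 oppr0.
  - by rewrite ip_f // eqxx.
by apply/HE; rewrite /v; case: (l == 0); [exact: orthZ_e0 | exact: Jop_orthZ].
Qed.

Lemma projW_eq0_of_rank j : \rank EM = 2%N -> inZ j -> forall x, orthZ x -> projW x = 0.
Proof.
move=> rE Zj x x_E; apply/eqP/contraT => w_neq0; set w := projW x.
have ww := ip_orth_timelike_neq0 (ip_projW_e0 x) w_neq0.
pose v (l : 'I_3) := if l == 0 then e0 else if l == 1 then f j else w.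
pose v' (l : 'I_3) := if l == 0 then - e0 else if l == 1 then f j else (ip w w)^-1 *: w.
have : (3 <= \rank EM)%N.
  apply: (biorthogonal_rank (v := v) (w := v')) => [l m|l].
    rewrite /v /v'; case: l m => [[|[|[|l]]] ?] [[|[|[|m]]] ?] //=.
    - by rewrite ipNr ip_frame_diag e_k0 opprK.
    - by rewrite ipC ip_Jop_e0.
    - by rewrite ipZr ipC ip_projW_e0 mulr0.
    - by rewrite ipNr ip_Jop_e0 oppr0.
    - by rewrite ip_f // eqxx.
    - by rewrite ipZr ipC ip_projW_f // mulr0.
    - by rewrite ipNr ip_projW_e0 oppr0.
    - by rewrite ip_projW_f.
    - by rewrite ipZr mulVf.
  apply/HE; rewrite /v; case: (l == 0); first exact: orthZ_e0.
  by case: (l == 1); [exact: Jop_orthZ | exact: orthZ_projW].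
by rewrite rE.
Qed.

Lemma rank_of_nilsoliton : nilsoliton br G -> (\rank ZM = 1 /\ \rank EM = 2)%N.
Proof.
case=> c [D [D_der Ric_cD]]; have [j Zj] := exists_center_frame.
have inZ_j : inZ =1 pred1 j.
  by move=> k /=; apply/idP/eqP => [Zk|->//]; apply: (soliton_center_frame_unique D_der).
split; first exact: rank_center_line inZ_j.
by apply: (rank_orthZ_plane Zj inZ_j) => x; exact: (soliton_projW D_der Ric_cD).
Qed.

Lemma nilsoliton_of_rank : (\rank ZM = 1 /\ \rank EM = 2)%N -> nilsoliton br G.
Proof.
case=> rZ rE; have [j Zj] := exists_center_frame.
have inZ_j := center_line_of_rank rZ Zj.
apply: (nilsoliton_of_Ric_eigen (Ric_center_line Zj inZ_j)).
exact: Ric_orthZ_plane Zj inZ_j (projW_eq0_of_rank rE Zj).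
Qed.

End LorentzianNilpotent.

Theorem mainTheorem3 (R : realType) (d : nat)
  (br : 'rV[R]_d -> 'rV[R]_d -> 'rV[R]_d) (G ZM EM B : 'M[R]_d) (eps : 'rV[R]_d) :
  two_step_nilpotent br ->
  lorentzian G ->
  (forall z, (z <= ZM)%MS <-> center br z) ->
  (forall x, (x <= EM)%MS <-> (forall z, center br z -> ipG G x z = 0)) ->
  (forall z, center br z -> z != 0 -> 0 < ipG G z z) ->
  adapted_orthonormal_basis G ZM EM B eps ->
  pH_type br G EM (iotaM B eps) ->
  (nilsoliton br G <-> (\rank ZM = 1 /\ \rank EM = 2)%N).
Proof.
move=> br_nil G_lor HZ HE center_pos [B_unit eps_sign BGB adapted] pH.
have G_sym : G^T = G by case: G_lor.
have G_unit := frame_form_unit eps_sign BGB.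
pose inZ i := (row i B <= ZM)%MS.
have frameZ i : inZ i -> center br (row i B) by move/HZ.
have frameE i : ~~ inZ i -> orthZ G br (row i B).
  by case: (adapted i) => [Zi /negP // | /HE].
have pH_E := fun z z_cen x x_E => pH z z_cen x (proj2 (HE x) x_E).
have [k0 e_k0] := frame_timelike G_sym G_lor eps_sign BGB.
split.
- exact: (rank_of_nilsoliton G_sym G_unit G_lor B_unit eps_sign BGB e_k0 br_nil
            frameZ frameE center_pos pH_E HZ HE).
- exact: (nilsoliton_of_rank G_sym G_unit G_lor B_unit eps_sign BGB e_k0 br_nil
            frameZ frameE center_pos pH_E HZ HE).
Qed.
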